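(* Let $k\ge 1$ and $m_1,d_1,\dots,d_k$ be positive integers, let $\mathbf d=(m_1,d_1,\dots,d_k,1)$ and $\gamma>0$. For each pair of positive integers $(a,b)$ let $\|\cdot\|_*$ be a norm on $\mathbb{R}^{a\times b}$. Let $\mathcal{N}^{k,\mathbf d}_{\gamma_*\le\gamma}$ be the class of all functions $f:\mathbb{R}^{m_1}\to\mathbb{R}$ of the form $f=T_{k+1}\circ\sigma\circ T_k\circ\cdots\circ\sigma\circ T_1$, where $T_i:\mathbb{R}^{d_{i-1}}\to\mathbb{R}^{d_i}$ (with $d_0=m_1$, $d_{k+1}=1$) is given by $T_i(u)=\tilde V_i^T(1,u^T)^T$ for some $\tilde V_i\in\mathbb{R}^{(d_{i-1}+1)\times d_i}$, and $\gamma_*:=\prod_{i=1}^{k+1}\|\tilde V_i\|_*\le\gamma$. Then for every $n\ge1$ and every sample $S=\{x_1,\dots,x_n\}\subseteq\mathbb{R}^{m_1}$, $$\widehat{\mathfrak{R}}_S\big(\mathcal{N}^{k,\mathbf d}_{\gamma_*\le\gamma}\big)=\infty.$$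
   Context: $\sigma(u)=\max(u,0)$ for $u\in\mathbb{R}$, applied coordinatewise to vectors. For a class $\mathcal F$ of real-valued functions and a sample $S=\{x_1,\dots,x_n\}$, the empirical Rademacher complexity is $\widehat{\mathfrak{R}}_S(\mathcal F)=\mathbb{E}_\epsilon\big[\sup_{f\in\mathcal F}\frac1n\sum_{i=1}^n\epsilon_i f(x_i)\big]$, where $\epsilon_1,\dots,\epsilon_n$ are i.i.d. uniform on $\{-1,+1\}$. *)

From Stdlib Require Import Reals Lra List ClassicalEpsilon.
Import ListNotations.
Open Scope R_scope.

Definition relu (u : R) : R := Rmax u 0.

(** Vectors of R^d are represented as [nat -> R] (only coordinates < d
    matter); matrices of R^{a x b} as [nat -> nat -> R] (entries (i,j) with
    i < a, j < b matter). *)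
Definition vec := nat -> R.
Definition mat := nat -> nat -> R.

Fixpoint sumn (n : nat) (g : nat -> R) : R :=
  match n with O => 0 | S n' => sumn n' g + g n' end.

(** A norm on R^{a x b} (as a function on representatives, depending only
    on the entries inside the a x b range). *)
Definition agree (a b : nat) (A B : mat) : Prop :=
  forall i j, (i < a)%nat -> (j < b)%nat -> A i j = B i j.

Definition is_mat_norm (a b : nat) (N : mat -> R) : Prop :=
  (forall A B, agree a b A B -> N A = N B) /\
  (forall A, 0 <= N A) /\
  (forall A, N A = 0 -> agree a b A (fun _ _ => 0)) /\
  (forall c A, N (fun i j => c * A i j) = Rabs c * N A) /\
  (forall A B, N (fun i j => A i j + B i j) <= N A + N B).

Definition dim (k m1 : nat) (ds : nat -> nat) (i : nat) : nat :=
  if Nat.eqb i 0 then m1 else if Nat.eqb i (S k) then 1%nat else ds i.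

(** Affine map T(u) = Vt^T (1, u^T)^T with Vt of size (din+1) x dout:
    T(u)_j = Vt 0 j + sum_{l<din} Vt (l+1) j * u l. *)
Definition affine (din : nat) (Vt : mat) (u : vec) : vec :=
  fun j => Vt O j + sumn din (fun l => Vt (S l) j * u l).

Fixpoint hidden (k m1 : nat) (ds : nat -> nat) (V : nat -> mat) (x : vec)
  (i : nat) : vec :=
  match i with
  | O => x
  | S i' => fun j => relu (affine (dim k m1 ds i') (V (S i'))
                               (hidden k m1 ds V x i') j)
  end.

Definition network (k m1 : nat) (ds : nat -> nat) (V : nat -> mat) (x : vec) : R :=
  affine (dim k m1 ds k) (V (S k)) (hidden k m1 ds V x k) O.

Fixpoint prodn (n : nat) (g : nat -> R) : R :=
  match n with O => 1 | S n' => prodn n' g * g n' end.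

Definition gamma_star (k m1 : nat) (ds : nat -> nat)
  (norm : nat -> nat -> mat -> R) (V : nat -> mat) : R :=
  prodn (S k) (fun i => norm (S (dim k m1 ds i)) (dim k m1 ds (S i)) (V (S i))).

Definition NetClass (k m1 : nat) (ds : nat -> nat)
  (norm : nat -> nat -> mat -> R) (gamma : R) (f : vec -> R) : Prop :=
  exists V : nat -> mat,
    gamma_star k m1 ds norm V <= gamma /\
    forall x, f x = network k m1 ds V x.

Inductive ereal := Fin (r : R) | PInf | NInf.

Definition esup (E : R -> Prop) : ereal :=
  match excluded_middle_informative (exists x, E x) with
  | right _ => NInf
  | left ne =>
      match excluded_middle_informative (bound E) with
      | right _ => PInf
      | left b => Fin (proj1_sig (completeness E b ne))
      end
  end.

(** Addition on extended reals (+oo absorbing; the case +oo + -oo never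
    arises below since every sup is >= 0, the zero network being in the class). *)
Definition eadd (x y : ereal) : ereal :=
  match x, y with
  | PInf, _ | _, PInf => PInf
  | NInf, _ | _, NInf => NInf
  | Fin a, Fin b => Fin (a + b)
  end.

Definition escale (c : R) (x : ereal) : ereal :=
  match x with Fin a => Fin (c * a) | e => e end.

Fixpoint signs (n : nat) : list (list R) :=
  match n with
  | O => [[]]
  | S n' => map (cons 1) (signs n') ++ map (cons (-1)) (signs n')
  end.

Definition corr (eps : list R) (xs : list vec) (f : vec -> R) : R :=
  fold_right Rplus 0 (map (fun p => fst p * f (snd p)) (combine eps xs))
  / INR (length xs).

Definition emp_rademacher (F : (vec -> R) -> Prop) (xs : list vec) : ereal :=
  escale (/ 2 ^ length xs)
    (fold_right eadd (Fin 0)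
       (map (fun eps => esup (fun r => exists f, F f /\ r = corr eps xs f))
            (signs (length xs)))).

(* The product [gamma_*] of the layer norms does not see the bias of the
   output layer: if the first weight matrix vanishes then [gamma_* = 0], and
   the network is the constant given by the last bias, which is arbitrary.
   Hence every constant function lies in the class, so for the all-ones sign
   vector the supremum of the correlation is [+oo]; this term absorbs the
   whole average over sign vectors. *)
From Stdlib Require Import Reals List Lra Lia ClassicalEpsilon.
Import ListNotations.
Open Scope R_scope.

Lemma sumn_eq0 (n : nat) (g : nat -> R) :
  (forall l, g l = 0) -> sumn n g = 0.
Proof.
  intros Hg; induction n as [|n IH]; simpl; [reflexivity|].
  rewrite IH, Hg; ring.
Qed.

Lemma prodn_eq0 (n : nat) (g : nat -> R) : g O = 0 -> prodn (S n) g = 0.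
Proof.
  intros Hg; induction n as [|n IH]; simpl in *.
  - rewrite Hg; ring.
  - rewrite IH; ring.
Qed.

Lemma mat_norm0 (a b : nat) (N : mat -> R) :
  is_mat_norm a b N -> N (fun _ _ => 0) = 0.
Proof.
  intros [Hagree [_ [_ [Hscale _]]]].
  rewrite (Hagree _ (fun i j => 0 * (fun _ _ => 0) i j)).
  - rewrite Hscale, Rabs_R0; ring.
  - intros i j _ _; ring.
Qed.

Lemma hidden_zero_layer (k m1 : nat) (ds : nat -> nat) (V : nat -> mat)
  (x : vec) (i : nat) :
  (forall r s, V (S i) r s = 0) -> forall j, hidden k m1 ds V x (S i) j = 0.
Proof.
  intros HV j; simpl; unfold affine, relu.
  rewrite HV, sumn_eq0 by (intro l; rewrite HV; ring).
  rewrite Rplus_0_l; apply Rmax_left; lra.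
Qed.

Definition constant_net (k : nat) (c : R) : nat -> mat :=
  fun i => if Nat.eqb i (S k) then fun _ _ => c else fun _ _ => 0.

Lemma network_constant_net (k m1 : nat) (ds : nat -> nat) (c : R) (x : vec) :
  (1 <= k)%nat -> network k m1 ds (constant_net k c) x = c.
Proof.
  intros Hk; destruct k as [|k']; [lia|].
  assert (Hhid : forall j, hidden (S k') m1 ds (constant_net (S k') c) x (S k') j = 0).
  { apply hidden_zero_layer; intros r s; unfold constant_net.
    replace (Nat.eqb (S k') (S (S k'))) with false
      by (symmetry; apply Nat.eqb_neq; lia).
    reflexivity. }
  unfold network, affine, constant_net; rewrite Nat.eqb_refl.
  rewrite sumn_eq0 by (intro l; rewrite Hhid; ring).
  ring.
Qed.

Lemma gamma_star_constant_net (k m1 : nat) (ds : nat -> nat)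
  (norm : nat -> nat -> mat -> R) (c : R) :
  (1 <= k)%nat ->
  (forall i, (1 <= i <= k)%nat -> (0 < ds i)%nat) ->
  (forall a b, (0 < a)%nat -> (0 < b)%nat -> is_mat_norm a b (norm a b)) ->
  gamma_star k m1 ds norm (constant_net k c) = 0.
Proof.
  intros Hk Hds Hnorm; unfold gamma_star; apply prodn_eq0.
  assert (Hfirst : constant_net k c 1%nat = fun _ _ => 0).
  { unfold constant_net.
    replace (Nat.eqb 1 (S k)) with false by (symmetry; apply Nat.eqb_neq; lia).
    reflexivity. }
  assert (Hdim : dim k m1 ds 1 = ds 1%nat).
  { unfold dim; replace (Nat.eqb 1 (S k)) with false
      by (symmetry; apply Nat.eqb_neq; lia).
    reflexivity. }
  rewrite Hfirst, Hdim.
  apply (mat_norm0 (S (dim k m1 ds 0)) (ds 1%nat)); apply Hnorm; [lia | apply Hds; lia].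
Qed.

Lemma NetClass_const (k m1 : nat) (ds : nat -> nat)
  (norm : nat -> nat -> mat -> R) (gamma c : R) :
  (1 <= k)%nat ->
  (forall i, (1 <= i <= k)%nat -> (0 < ds i)%nat) ->
  (forall a b, (0 < a)%nat -> (0 < b)%nat -> is_mat_norm a b (norm a b)) ->
  0 <= gamma ->
  NetClass k m1 ds norm gamma (fun _ => c).
Proof.
  intros Hk Hds Hnorm Hg; exists (constant_net k c); split.
  - rewrite gamma_star_constant_net; assumption.
  - intro x; symmetry; apply network_constant_net; assumption.
Qed.

Lemma corr_ones_const (xs : list vec) (c : R) :
  (1 <= length xs)%nat -> corr (repeat 1 (length xs)) xs (fun _ => c) = c.
Proof.
  intros Hl; unfold corr.
  assert (Hsum : forall ys : list vec,
    fold_right Rplus 0 (map (fun p => fst p * c) (combine (repeat 1 (length ys)) ys))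
    = INR (length ys) * c).
  { induction ys as [|y ys IH]; simpl; [ring|].
    rewrite IH; destruct (length ys); simpl; ring. }
  rewrite Hsum; field; apply not_0_INR; lia.
Qed.

Lemma esup_full (E : R -> Prop) : (forall r, E r) -> esup E = PInf.
Proof.
  intros HE; unfold esup.
  destruct (excluded_middle_informative (exists x, E x)) as [Hex|Hne].
  - destruct (excluded_middle_informative (bound E)) as [[M HM]|Hub];
      [|reflexivity].
    exfalso; pose proof (HM (M + 1) (HE (M + 1))); lra.
  - exfalso; apply Hne; exists 0; apply HE.
Qed.

Lemma signs_head (n : nat) : exists t, signs n = repeat 1 n :: t.
Proof.
  induction n as [|n [t IH]]; simpl.
  - exists []; reflexivity.
  - rewrite IH; eexists; reflexivity.
Qed.

Theorem claim1 (k m1 : nat) (ds : nat -> nat)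
  (norm : nat -> nat -> mat -> R) (gamma : R) (xs : list vec) :
  (1 <= k)%nat ->
  (0 < m1)%nat ->
  (forall i, (1 <= i <= k)%nat -> (0 < ds i)%nat) ->
  (forall a b, (0 < a)%nat -> (0 < b)%nat -> is_mat_norm a b (norm a b)) ->
  0 < gamma ->
  (1 <= length xs)%nat ->
  emp_rademacher (NetClass k m1 ds norm gamma) xs = PInf.
Proof.
  intros Hk _ Hds Hnorm Hg Hl.
  assert (Hsup : esup (fun r => exists f, NetClass k m1 ds norm gamma f /\
                   r = corr (repeat 1 (length xs)) xs f) = PInf).
  { apply esup_full; intro r; exists (fun _ => r); split.
    - apply NetClass_const; auto; lra.
    - symmetry; apply corr_ones_const; assumption. }
  unfold emp_rademacher.
  destruct (signs_head (length xs)) as [t Ht]; rewrite Ht; simpl.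
  rewrite Hsup; reflexivity.
Qed.
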